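(* Let $n,T\in\mathbb{N}$ and let real numbers $r_{it}$, $i\in\{1,\ldots,n\}$, $t\in\{1,\ldots,T\}$, be given. Consider the random return vector $\boldsymbol{r}=(r_1,\ldots,r_n)^{\mathsf T}$ which takes the value $(r_{1t},\ldots,r_{nt})^{\mathsf T}$ in scenario $t$, each scenario having probability $1/T$, and let $\mu_i=\frac1T\sum_{t=1}^T r_{it}$, $\boldsymbol{\mu}=(\mu_1,\ldots,\mu_n)^{\mathsf T}$. Define $\mathrm{MAD}(\boldsymbol{x})=\mathbb{E}\big[|(\boldsymbol{r}-\boldsymbol{\mu})^{\mathsf T}\boldsymbol{x}|\big]=\frac1T\sum_{t=1}^T|\sum_{i=1}^n (r_{it}-\mu_i)x_i|$ for $\boldsymbol{x}\in\mathbb{R}^n$, with convex subdifferential $\partial\mathrm{MAD}(\boldsymbol{x})$. Let $\Delta^{n-1}=\{\boldsymbol{x}\in\mathbb{R}^n: x_i\ge0\ \forall i,\ \sum_i x_i=1\}$, and call $\boldsymbol{x}\in\Delta^{n-1}$ a MAD-RP portfolio if there exist $\boldsymbol{s}\in\partial\mathrm{MAD}(\boldsymbol{x})$ and $\lambda\in\mathbb{R}$ with $x_is_i=\lambda$ for all $i$. Suppose that the only vector $\boldsymbol{x}\in\mathbb{R}^n_+$ with $\sum_{i}(r_{it}-\mu_i)x_i=0$ for every $t$ is $\boldsymbol{x}=0$, and suppose moreover that $$(r_{it}-\mu_i)(r_{jt}-\mu_j)\geq 0\quad\text{for every } t\in\{1,\ldots,T\} \text{ and } i,j\in\{1,\ldots,n\},\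 i\neq j.$$ Then the unique MAD-RP portfolio is given by $$x_i=\frac{\mathbb{E}[|r_i-\mu_i|]^{-1}}{\sum_{j=1}^n\mathbb{E}[|r_j-\mu_j|]^{-1}},\qquad i\in\{1,\ldots,n\}.$$
   Context: $\mathbb{R}^n_+$ denotes the set of vectors in $\mathbb{R}^n$ with all components nonnegative; $\mathbb{E}[|r_i-\mu_i|]=\frac1T\sum_{t=1}^T|r_{it}-\mu_i|$. *)

From HB Require Import structures.
From mathcomp Require Import all_boot all_order all_algebra.
From mathcomp Require Import reals.
Set Implicit Arguments. Unset Strict Implicit. Unset Printing Implicit Defensive.
Import Order.TTheory GRing.Theory Num.Theory.
Local Open Scope ring_scope.

Section Defs.
Variables (R : realType) (n T : nat).
Variable r : 'I_n -> 'I_T -> R.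

Definition mu (i : 'I_n) : R := (\sum_(t < T) r i t) / T%:R.

Definition MAD (x : 'I_n -> R) : R :=
  (\sum_(t < T) `| \sum_(i < n) (r i t - mu i) * x i |) / T%:R.

Definition Emad (i : 'I_n) : R := (\sum_(t < T) `| r i t - mu i |) / T%:R.

End Defs.

Definition subgrad (R : realType) (n : nat) (f : ('I_n -> R) -> R)
  (x s : 'I_n -> R) : Prop :=
  forall y : 'I_n -> R, f x + \sum_(i < n) s i * (y i - x i) <= f y.

Definition in_simplex (R : realType) (n : nat) (x : 'I_n -> R) : Prop :=
  (forall i, 0 <= x i) /\ \sum_(i < n) x i = 1.

Definition MAD_RP (R : realType) (n T : nat) (r : 'I_n -> 'I_T -> R)
  (x : 'I_n -> R) : Prop :=
  in_simplex x /\
  exists s : 'I_n -> R, subgrad (MAD r) x s /\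
    exists lambda : R, forall i, x i * s i = lambda.

From HB Require Import structures.
From mathcomp Require Import all_boot all_order all_algebra.
From mathcomp Require Import reals.
Set Implicit Arguments. Unset Strict Implicit. Unset Printing Implicit Defensive.
Import Order.TTheory GRing.Theory Num.Theory.
Local Open Scope ring_scope.

(* Under the sign condition all deviations r_it - mu_i of a scenario t share
   one sign, so |sum_i (r_it - mu_i) y_i| = sum_i |r_it - mu_i| y_i for y >= 0:
   MAD coincides with the linear form y |-> sum_i E[|r_i - mu_i|] y_i on the
   nonnegative orthant and dominates it everywhere.  Hence this linear form's
   gradient is a subgradient at every nonnegative x, and any subgradient agrees
   with it on the support of x.  Nondegeneracy makes every E[|r_i - mu_i|]
   positive, so the risk-parity condition x_i s_i = lambda forces full support,
   and then x_i is proportional to E[|r_i - mu_i|]^-1. *)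

Section CommonSign.
Variables (R : realDomainType) (I : finType) (d : I -> R).
Hypothesis d_sign : forall i j, i != j -> 0 <= d i * d j.

Lemma common_sign : exists2 sg : R, `|sg| = 1 & forall i, `|d i| = sg * d i.
Proof.
have [/existsP [i d_i_gt0] | /existsPn d_le0] := boolP [exists i, 0 < d i].
  exists 1; first by rewrite normr1.
  move=> j; rewrite mul1r ger0_norm //.
  have [<- | neq_ij] := eqVneq i j; first exact: ltW.
  by have := d_sign neq_ij; rewrite pmulr_rge0.
exists (-1); first by rewrite normrN1.
by move=> j; rewrite mulN1r ler0_norm // leNgt d_le0.
Qed.

Lemma sum_norm_mul_le (y : I -> R) :
  \sum_i `|d i| * y i <= `|\sum_i d i * y i|.
Proof.
have [sg sg_unit dE] := common_sign.
have -> : \sum_i `|d i| * y i = sg * \sum_i d i * y i.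
  by rewrite mulr_sumr; apply: eq_bigr => i _; rewrite dE mulrA.
by rewrite -[X in _ <= X]mul1r -sg_unit -normrM ler_norm.
Qed.

Lemma sum_norm_mul_eq (y : I -> R) : (forall i, 0 <= y i) ->
  \sum_i `|d i| * y i = `|\sum_i d i * y i|.
Proof.
move=> y_ge0; apply/eqP; rewrite eq_le sum_norm_mul_le /=.
apply: le_trans (ler_norm_sum _ _ _) _.
by apply: ler_sum => i _; rewrite normrM [`|y i|]ger0_norm.
Qed.

End CommonSign.

Section MeanAbsoluteDeviation.
Variables (R : realType) (n T : nat) (r : 'I_n -> 'I_T -> R).

Lemma sum_Emad_mul (y : 'I_n -> R) :
  \sum_i Emad r i * y i = (\sum_t \sum_i `|r i t - mu r i| * y i) / T%:R.
Proof.
rewrite exchange_big /= mulr_suml; apply: eq_bigr => i _.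
by rewrite /Emad mulrAC mulr_suml.
Qed.

Hypothesis hsign : forall (t : 'I_T) (i j : 'I_n), i != j ->
  0 <= (r i t - mu r i) * (r j t - mu r j).

Lemma MAD_ge_Emad (y : 'I_n -> R) : \sum_i Emad r i * y i <= MAD r y.
Proof.
rewrite sum_Emad_mul ler_wpM2r ?invr_ge0 ?ler0n //.
by apply: ler_sum => t _; apply: sum_norm_mul_le => i j; apply: hsign.
Qed.

Lemma MAD_eq_Emad (y : 'I_n -> R) : (forall i, 0 <= y i) ->
  MAD r y = \sum_i Emad r i * y i.
Proof.
move=> y_ge0; rewrite sum_Emad_mul; congr (_ / _); apply: eq_bigr => t _.
by rewrite sum_norm_mul_eq // => i j; apply: hsign.
Qed.

End MeanAbsoluteDeviation.

Lemma Emad_gt0 (R : realType) (n T : nat) (r : 'I_n -> 'I_T -> R) :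
  (forall x : 'I_n -> R, (forall i, 0 <= x i) ->
     (forall t : 'I_T, \sum_(i < n) (r i t - mu r i) * x i = 0) ->
     forall i, x i = 0) ->
  forall k, 0 < Emad r k.
Proof.
move=> hnondeg k; rewrite lt0r divr_ge0 ?ler0n ?sumr_ge0 // andbT.
apply/negP; rewrite mulf_eq0 invr_eq0 pnatr_eq0 => Emad_eq0.
have dev_k_eq0 t : r k t - mu r k = 0.
  case/orP: Emad_eq0 => [/eqP sum_eq0 | /eqP T_eq0].
    by apply/eqP; rewrite -normr_eq0; move/psumr_eq0P: sum_eq0 => ->.
  by have := ltn_ord t; rewrite [X in (_ < X)%N]T_eq0.
suff : (k == k)%:R = 0 :> R by rewrite eqxx => /eqP; rewrite oner_eq0.
apply: (hnondeg (fun i => (i == k)%:R)) => [i | t]; first exact: ler0n.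
rewrite (bigD1 k) //= dev_k_eq0 mul0r add0r big1 // => i /negbTE ->.
by rewrite mulr0.
Qed.

Section LinearOnOrthant.
Variables (R : realType) (n : nat) (f : ('I_n -> R) -> R) (g : 'I_n -> R).
Hypothesis f_ge : forall y, \sum_i g i * y i <= f y.
Hypothesis f_eq : forall y, (forall i, 0 <= y i) -> f y = \sum_i g i * y i.

Lemma subgrad_linear_minorant (x : 'I_n -> R) :
  (forall i, 0 <= x i) -> subgrad f x g.
Proof.
move=> x_ge0 y; rewrite f_eq // -big_split /=.
under eq_bigr do rewrite -mulrDr subrKC.
exact: f_ge.
Qed.

Lemma subgrad_coord_le (x s : 'I_n -> R) (j : 'I_n) (c : R) :
  (forall i, 0 <= x i) -> subgrad f x s -> - x j <= c ->
  (s j - g j) * c <= 0.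
Proof.
move=> x_ge0 s_sub c_ge.
pose y i := x i + c * (i == j)%:R.
have y_ge0 i : 0 <= y i.
  rewrite /y; have [-> | _] := eqVneq i j; last by rewrite mulr0 addr0.
  by rewrite mulr1 -lerBlDl sub0r.
have shift (a : 'I_n -> R) : \sum_i a i * (y i - x i) = a j * c.
  rewrite (bigD1 j) //= big1 => [|i /negbTE neq_ij].
    by rewrite /y eqxx mulr1 addr0 addrC addKr.
  by rewrite /y neq_ij mulr0 addr0 subrr mulr0.
have shift_g : \sum_i g i * y i = \sum_i g i * x i + g j * c.
  rewrite -shift -big_split /=.
  by apply: eq_bigr => i _; rewrite -mulrDr subrKC.
have := s_sub y; rewrite !f_eq // shift_g shift lerD2l.
by rewrite mulrBl subr_le0.
Qed.

Lemma subgrad_coord_eq (x s : 'I_n -> R) (j : 'I_n) :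
  (forall i, 0 <= x i) -> subgrad f x s -> 0 < x j -> s j = g j.
Proof.
move=> x_ge0 s_sub x_j_gt0; apply/eqP; rewrite -subr_eq0 eq_le.
have := @subgrad_coord_le x s j 1 x_ge0 s_sub.
rewrite mulr1 => -> /=; last by rewrite lerNl (le_trans _ (x_ge0 j)) ?lerN10.
have := subgrad_coord_le x_ge0 s_sub (lexx (- x j)).
by rewrite mulrN oppr_le0 pmulr_lge0.
Qed.

Lemma subgrad_risk_parity (x s : 'I_n -> R) (lam : R) :
  (forall i, 0 < g i) -> in_simplex x -> subgrad f x s ->
  (forall i, x i * s i = lam) -> forall i, x i * g i = lam.
Proof.
move=> g_pos [x_ge0 x_sum1] s_sub x_s.
have [k /= x_k_gt0] : exists k, true && (0 < x k).
  by apply: psumr_neq0P => //; rewrite x_sum1 => /eqP; rewrite oner_eq0.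
have lam_gt0 : 0 < lam.
  by rewrite -(x_s k) (subgrad_coord_eq x_ge0 s_sub x_k_gt0) mulr_gt0.
move=> i; have x_i_gt0 : 0 < x i.
  rewrite lt0r x_ge0 andbT; apply: contraTneq lam_gt0 => x_i_eq0.
  by rewrite -(x_s i) x_i_eq0 mul0r ltxx.
by rewrite -(subgrad_coord_eq x_ge0 s_sub x_i_gt0).
Qed.

End LinearOnOrthant.

Lemma risk_parity_weights (R : fieldType) (I : finType) (g x : I -> R) lam :
  (forall i, g i != 0) -> \sum_i x i = 1 -> (forall i, x i * g i = lam) ->
  forall i, x i = (g i)^-1 / \sum_j (g j)^-1.
Proof.
move=> g_neq0 x_sum1 x_g.
have xE i : x i = lam * (g i)^-1 by rewrite -(x_g i) mulfK.
have lam_sum : lam * \sum_j (g j)^-1 = 1.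
  by rewrite mulr_sumr -x_sum1; apply: eq_bigr => j _; rewrite xE.
have sum_neq0 : \sum_j (g j)^-1 != 0.
  by apply: contra_eq_neq lam_sum => ->; rewrite mulr0 eq_sym oner_neq0.
have lamE : lam = (\sum_j (g j)^-1)^-1.
  by rewrite -[lam](mulfK sum_neq0) lam_sum mul1r.
by move=> i; rewrite xE lamE mulrC.
Qed.

Lemma inverse_weights_risk_parity (R : realType) (n : nat) (g x : 'I_n -> R) :
  (0 < n)%N -> (forall i, 0 < g i) ->
  (forall i, x i = (g i)^-1 / \sum_j (g j)^-1) ->
  in_simplex x /\ forall i, x i * g i = (\sum_j (g j)^-1)^-1.
Proof.
move=> n_gt0 g_pos xE.
have sum_gt0 : 0 < \sum_j (g j)^-1.
  rewrite (bigD1 (Ordinal n_gt0)) //= ltr_pwDl ?invr_gt0 //.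
  by apply: sumr_ge0 => j _; rewrite invr_ge0 ltW.
split; first split.
- by move=> i; rewrite xE ltW // divr_gt0 ?invr_gt0.
- by rewrite (eq_bigr _ (fun i _ => xE i)) -mulr_suml mulfV ?gt_eqF.
- by move=> i; rewrite xE mulrAC mulVf ?mul1r ?gt_eqF.
Qed.

Unset Implicit Arguments.

Theorem proposition3 (R : realType) (n T : nat) (r : 'I_n -> 'I_T -> R)
  (hn : (0 < n)%N)
  (hnondeg : forall x : 'I_n -> R, (forall i, 0 <= x i) ->
     (forall t : 'I_T, \sum_(i < n) (r i t - mu r i) * x i = 0) ->
     forall i, x i = 0)
  (hsign : forall (t : 'I_T) (i j : 'I_n), i != j ->
     0 <= (r i t - mu r i) * (r j t - mu r j)) :
  forall x : 'I_n -> R,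
    MAD_RP r x <->
    (forall i, x i = (Emad r i)^-1 / \sum_(j < n) (Emad r j)^-1).
Proof.
have Emad_pos := Emad_gt0 hnondeg.
have MAD_ge := MAD_ge_Emad hsign; have MAD_eq := MAD_eq_Emad hsign.
move=> x; split.
- case=> x_simplex [s [s_sub [lam x_s]]].
  have x_Emad := subgrad_risk_parity MAD_eq Emad_pos x_simplex s_sub x_s.
  by apply: risk_parity_weights x_simplex.2 x_Emad => i; rewrite gt_eqF.
- move=> xE.
  have [x_simplex x_Emad] := inverse_weights_risk_parity hn Emad_pos xE.
  split=> //; exists (Emad r); split.
    exact: subgrad_linear_minorant MAD_ge MAD_eq _ x_simplex.1.
  by exists (\sum_(j < n) (Emad r j)^-1)^-1.
Qed.
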